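(* Let $\mathbb{F}$, $\mathfrak g$, $\mathcal C$, $\mathcal C^{du}$, $M$, $Lie(\cdot)$ be as in the context. Let $x\in\mathfrak g\setminus\{0\}$ be such that for every object $V$ of $\mathcal C$: (1) $x_V$ is locally nilpotent, and (2) $\exp(tx_V)\in End_{V^{du}}(V)$ for all $t\in\mathbb F$. Then $x$ is an integrable locally finite element of $\mathfrak g$. Furthermore: (a) for every $t\in\mathbb F$ there is an element $\exp(tx)\in M$ acting on every object $V$ by $\exp(tx_V)$; (b) equipping $\mathbb F$ with the polynomial functions $\mathbb F[t]$, the map $u_x:(\mathbb F,+)\to M$, $t\mapsto\exp(tx)$, is a morphism of monoids and a closed embedding of sets with coordinate rings; denote its image $U_x$; (c) $Lie(U_x)=\mathbb Fx$.
   Context: Let $\mathbb F$ be a field of characteristic $0$, $\mathfrak g$ a Lie algebra over $\mathbb F$. $\mathcal C$: full subcategory of $\mathfrak g$-modules closed under isomorphism and submodules, containing a direct sum and tensor product of any two objects and a one-dimensional trivial module, with only $0\in\mathfrak g$ acting trivially on all objects. $x_V$ = action. Category of duals: point-separating $V^{du}\subseteq V^*$ with $\phi\circ x_V\in V^{du}$ ($x\in\mathfrak g$), $\psi\circ\alpha\in V^{du}$ for morphisms $\alpha:V\to W$, $\psi\in W^{du}$, $(V\oplus W)^{du}=V^{du}\oplus W^{du}$, $V^{du}\otimes W^{du}\subseteq(V\otimes W)^{du}$. $End_{V^{du}}(V)=\{\varphi:\phi\circ\varphi\in V^{du}\ \forall\phi\}$. $Nat$: families $(m_V)_V$, $m_V\in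 End_{V^{du}}(V)$, commuting with all morphisms. $M=\{m\in Nat:m_{V\otimes W}=m_V\otimes m_W,\ m_{V_0}=id$ for trivial one-dimensional $V_0\}$; $\mathbb F[M]=\{f_{\phi v}\}$, $f_{\phi v}(m)=\phi(m_Vv)$; Zariski topology via common zero sets. $Lie(M)=\{y\in Nat:y_{V\otimes W}=y_V\otimes id+id\otimes y_W,\ y_{V_0}=0,\ \exists\,\delta_y:\mathbb F[M]\to\mathbb F$ with $\delta_y(f_{\phi v})=\phi(y_Vv)\}$; for a submonoid $N$ with vanishing ideal $I(N)$, $Lie(N)=\{y\in Lie(M):\delta_y(I(N))=0\}$; $\mathfrak g$ is identified with $\{(y_V)_V\}\subseteq Nat$. For a subalgebra $\mathfrak s$ acting locally finitely, $\mathcal C(\mathfrak s)$ is the category of $\mathfrak s$-modules isomorphic to finite-dimensional $\mathfrak s$-submodules of objects of $\mathcal C$ (all $\mathfrak s$-maps as morphisms), $M(\mathfrak s)$ the monoid obtained from it by the same construction with full duals $U^{du}=U^*$, with its matrix-coefficient coordinate ring and Zariski topology; it acts on objects $V$ of $\mathcal C$ by $m_Vv:=m_Uv$ for finite-dimensional $\mathfrak s$-submodules $U\ni v$. An element $e\in\mathfrak g$ is integrable locally finite if it acts locally finitely on all objects and there is a Zariski dense submonoid $D\subseteq M(\mathbb Fe)$ with $d_V\in End_{V^{du}}(V)$ for all $d\in D$ and objects $V$. Sets with coordinate rings: morphism $\varphi:X\to Y$ means $f\circ\varphi\in\mathbb F[X]$ for $f\in\mathbb F[Y]$; closed embedding: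 injective morphism with $\{f\circ\varphi\}=\mathbb F[X]$ and Zariski-closed image. *)

From HB Require Import structures.
From mathcomp Require Import all_boot all_order all_algebra.
From Stdlib Require Import ClassicalEpsilon.
Set Implicit Arguments. Unset Strict Implicit. Unset Printing Implicit Defensive.
Import Order.TTheory GRing.Theory Num.Theory.
Local Open Scope ring_scope.

Section LinAlg.
Variable F : fieldType.

Definition islin (U V : lmodType F) (f : U -> V) : Prop :=
  forall (a : F) (u v : U), f (a *: u + v) = a *: f u + f v.

Definition islinF (U : lmodType F) (phi : U -> F) : Prop :=
  forall (a : F) (u v : U), phi (a *: u + v) = a * phi u + phi v.

Definition isbilin (U V W : lmodType F) (b : U -> V -> W) : Prop :=
  (forall v, islin (fun u => b u v)) /\ (forall u, islin (b u)).

Definition is_tensor (U V T : lmodType F) (b : U -> V -> T) : Prop :=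
  isbilin b /\
  (forall (Z : lmodType F) (beta : U -> V -> Z), isbilin beta ->
     exists L : T -> Z, islin L /\ forall u v, L (b u v) = beta u v) /\
  (forall (Z : lmodType F) (L1 L2 : T -> Z), islin L1 -> islin L2 ->
     (forall u v, L1 (b u v) = L2 (b u v)) -> forall t, L1 t = L2 t).

Definition inspan (V : lmodType F) (s : seq V) (v : V) : Prop :=
  exists c : 'I_(size s) -> F, v = \sum_(i < size s) c i *: s`_i.

Definition findim (V : lmodType F) : Prop := exists s : seq V, forall v, inspan s v.

Definition onedim (V : lmodType F) : Prop :=
  exists v0 : V, v0 != 0 /\ forall v, exists c : F, v = c *: v0.

Definition locfin (V : lmodType F) (f : V -> V) : Prop :=
  forall v, exists s : seq V, inspan s v /\ forall u, u \in s -> inspan s (f u).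

Definition locnil (V : lmodType F) (f : V -> V) : Prop :=
  forall v, exists n : nat, iter n f v = 0.

(* a nilpotency index of f at v (0 if there is none) *)
Definition nilidx (V : lmodType F) (f : V -> V) (v : V) : nat :=
  match excluded_middle_informative (exists n : nat, iter n f v == 0) with
  | left H => xchoose H
  | right _ => 0%N
  end.

Definition expo (V : lmodType F) (f : V -> V) (t : F) (v : V) : V :=
  \sum_(k < nilidx f v) (t ^+ k / (k`!)%:R) *: iter k f v.

Section Generic.
Variables (Obj : Type) (car : Obj -> lmodType F) (inO : Obj -> Prop)
  (hom : forall V W : Obj, (car V -> car W) -> Prop)
  (tens : forall V W T : Obj, (car V -> car W -> car T) -> Prop)
  (triv : Obj -> Prop)
  (du : forall V : Obj, (car V -> F) -> Prop).

Definition natfamily := forall V : Obj, car V -> car V.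

Definition idfam : natfamily := fun V v => v.
Definition compfam (m1 m2 : natfamily) : natfamily := fun V v => m1 V (m2 V v).

Definition EndDu (V : Obj) (f : car V -> car V) : Prop :=
  islin f /\ forall phi, du phi -> du (fun v => phi (f v)).

Definition isNat (m : natfamily) : Prop :=
  (forall V, inO V -> EndDu (m V)) /\
  (forall V W (al : car V -> car W), inO V -> inO W -> hom al ->
     forall v, al (m V v) = m W (al v)).

Definition inMon (m : natfamily) : Prop :=
  isNat m /\
  (forall V W T (b : car V -> car W -> car T), inO V -> inO W -> inO T ->
     tens b -> forall v w, m T (b v w) = b (m V v) (m W w)) /\
  (forall V0, inO V0 -> triv V0 -> forall v, m V0 v = v).

Definition coordfun (V : Obj) (phi : car V -> F) (v : car V) : natfamily -> F :=
  fun m => phi (m V v).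

Definition inCoord (f : natfamily -> F) : Prop :=
  exists V (phi : car V -> F) (v : car V),
    inO V /\ du phi /\ forall m, inMon m -> f m = coordfun phi v m.

Definition zeroset (S : (natfamily -> F) -> Prop) : natfamily -> Prop :=
  fun m => inMon m /\ forall f, S f -> f m = 0.

Definition zclosed (Z : natfamily -> Prop) : Prop :=
  exists S : (natfamily -> F) -> Prop, (forall f, S f -> inCoord f) /\
    forall m, Z m <-> zeroset S m.

Definition zdense (D : natfamily -> Prop) : Prop :=
  forall S : (natfamily -> F) -> Prop, (forall f, S f -> inCoord f) ->
    (forall d, D d -> zeroset S d) -> forall m, inMon m -> zeroset S m.

Definition submonoid (D : natfamily -> Prop) : Prop :=
  (forall d, D d -> inMon d) /\ D idfam /\
  (forall d1 d2, D d1 -> D d2 -> D (compfam d1 d2)).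

Definition isDelta (y : natfamily) (delta : (natfamily -> F) -> F) : Prop :=
  (forall f g, inCoord f -> inCoord g -> (forall m, inMon m -> f m = g m) ->
     delta f = delta g) /\
  (forall V (phi : car V -> F) (v : car V), inO V -> du phi ->
     delta (coordfun phi v) = phi (y V v)).

Definition inLieM (y : natfamily) : Prop :=
  isNat y /\
  (forall V W T (b : car V -> car W -> car T), inO V -> inO W -> inO T ->
     tens b -> forall v w, y T (b v w) = b (y V v) w + b v (y W w)) /\
  (forall V0, inO V0 -> triv V0 -> forall v, y V0 v = 0) /\
  (exists delta, isDelta y delta).

Definition inLie (N : natfamily -> Prop) (y : natfamily) : Prop :=
  inLieM y /\ exists delta, isDelta y delta /\
    forall f, inCoord f -> (forall m, N m -> f m = 0) -> delta f = 0.

End Generic.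

End LinAlg.

Section LieMod.
Variables (F : fieldType) (g : lmodType F) (br : g -> g -> g).

Definition is_lie : Prop :=
  isbilin br /\ (forall x, br x x = 0) /\
  (forall x y z, br x (br y z) + br y (br z x) + br z (br x y) = 0).

Definition is_rep (V : lmodType F) (act : g -> V -> V) : Prop :=
  (forall x, islin (act x)) /\ (forall v, islin (fun x => act x v)) /\
  (forall x y v, act (br x y) v = act x (act y v) - act y (act x v)).

Record gmod := GMod {
  gcar :> lmodType F;
  gact : g -> gcar -> gcar;
  gact_rep : is_rep gact }.

Definition ghom (V W : gmod) (al : V -> W) : Prop :=
  islin al /\ forall x v, al (gact x v) = gact x (al v).

Definition gtensor (V W T : gmod) (b : V -> W -> T) : Prop :=
  is_tensor b /\ forall x v w, gact x (b v w) = b (gact x v) w + b v (gact x w).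

Definition gtriv (V : gmod) : Prop := onedim V /\ forall x v, gact x v = 0 :> V.

Definition gdsum (V W S : gmod) (i1 : V -> S) (i2 : W -> S) (p1 : S -> V)
    (p2 : S -> W) : Prop :=
  ghom i1 /\ ghom i2 /\ ghom p1 /\ ghom p2 /\
  (forall v, p1 (i1 v) = v) /\ (forall w, p2 (i2 w) = w) /\
  (forall w, p1 (i2 w) = 0) /\ (forall v, p2 (i1 v) = 0) /\
  (forall s, i1 (p1 s) + i2 (p2 s) = s).

Definition good_category (C : gmod -> Prop) : Prop :=
  (* closed under isomorphism and submodules (= injective g-maps into objects) *)
  (forall (V W : gmod) (al : W -> V), C V -> ghom al -> injective al -> C W) /\
  (forall V W : gmod, C V -> C W -> exists (S : gmod) i1 i2 p1 p2, C S /\ @gdsum V W S i1 i2 p1 p2) /\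
  (forall V W : gmod, C V -> C W -> exists (T : gmod) (b : V -> W -> T), C T /\ gtensor b) /\
  (exists V0, C V0 /\ gtriv V0) /\
  (forall x, (forall V, C V -> forall v, gact x v = 0 :> V) -> x = 0).

Definition dual_category (C : gmod -> Prop) (du : forall V : gmod, (V -> F) -> Prop)
  : Prop :=
  (forall V : gmod, C V ->
     (forall phi, du V phi -> islinF phi) /\
     du V (fun _ => 0) /\
     (forall a phi psi, du V phi -> du V psi -> du V (fun v => a * phi v + psi v)) /\
     (forall v : V, v != 0 -> exists phi, du V phi /\ phi v != 0) /\
     (forall x phi, du V phi -> du V (fun v => phi (gact x v)))) /\
  (forall (V W : gmod) (al : V -> W) psi, C V -> C W -> ghom al -> du W psi ->
     du V (fun v => psi (al v))) /\
  (forall (V W S : gmod) i1 i2 p1 p2, C V -> C W -> C S -> @gdsum V W S i1 i2 p1 p2 ->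
     forall psi, du S psi <->
       exists phi chi, du V phi /\ du W chi /\
         forall s, psi s = phi (p1 s) + chi (p2 s)) /\
  (forall (V W T : gmod) (b : V -> W -> T), C V -> C W -> C T -> gtensor b ->
     forall phi psi (L : T -> F), du V phi -> du W psi -> islinF L ->
       (forall v w, L (b v w) = phi v * psi w) -> du T L).

Definition Mg (C : gmod -> Prop) du := @inMon F gmod gcar C ghom gtensor gtriv du.
Definition coordg (C : gmod -> Prop) du := @inCoord F gmod gcar C ghom gtensor gtriv du.
Definition zclosedg (C : gmod -> Prop) du := @zclosed F gmod gcar C ghom gtensor gtriv du.
Definition Lieg (C : gmod -> Prop) du := @inLie F gmod gcar C ghom gtensor gtriv du.

(* an Fe-module is a vector space with the endomorphism by which e acts *)
Record smod := SMod { scar :> lmodType F; sE : scar -> scar }.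

Definition shom (U W : smod) (al : U -> W) : Prop :=
  islin al /\ forall u, al (sE u) = sE (al u).

Definition stensor (U W T : smod) (b : U -> W -> T) : Prop :=
  is_tensor b /\ forall u w, sE (b u w) = b (sE u) w + b u (sE w).

Definition striv (U : smod) : Prop := onedim U /\ forall u, sE u = 0 :> U.

(* objects of C(Fe): Fe-modules isomorphic to finite-dimensional Fe-submodules
   of objects of C *)
Definition inCs (C : gmod -> Prop) (e : g) (U : smod) : Prop :=
  islin (@sE U) /\ findim U /\
  exists V : gmod, C V /\ exists iota : U -> V,
    islin iota /\ injective iota /\ forall u, iota (sE u) = gact e (iota u).

Definition fulldu (U : smod) (phi : U -> F) : Prop := islinF phi.

Definition Ms C e := @inMon F smod scar (inCs C e) shom stensor striv fulldu.
Definition zdenses C e := @zdense F smod scar (inCs C e) shom stensor striv fulldu.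
Definition submonoids C e := @submonoid F smod scar (inCs C e) shom stensor striv fulldu.

Definition sacts (C : gmod -> Prop) (e : g) (d : natfamily scar) (V : gmod) (h : V -> V)
  : Prop :=
  forall (U : smod) (iota : U -> V), inCs C e U -> islin iota -> injective iota ->
    (forall u, iota (sE u) = gact e (iota u)) ->
    forall u, h (iota u) = iota (d U u).

Definition int_loc_fin (C : gmod -> Prop) (du : forall V : gmod, (V -> F) -> Prop)
  (e : g) : Prop :=
  (forall V, C V -> locfin (gact e : V -> V)) /\
  exists D : natfamily scar -> Prop,
    submonoids C e D /\ zdenses C e D /\
    forall d, D d -> forall V, C V ->
      exists h : V -> V, sacts C e d h /\ @EndDu F gmod gcar du V h.

End LieMod.

Definition expfam (F : fieldType) (g : lmodType F) (br : g -> g -> g) (x : g) (t : F)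
  : natfamily (@gcar F g br) := fun V => expo (gact x : V -> V) t.
Arguments expfam {F g} br x t V.

Definition Ufam (F : fieldType) (g : lmodType F) (br : g -> g -> g)
  (C : gmod br -> Prop) (x : g) : natfamily (@gcar F g br) -> Prop :=
  fun m => exists t : F, forall V, C V -> forall v, m V v = expfam br x t V v.

From HB Require Import structures.
From mathcomp Require Import all_boot all_order all_algebra.
From mathcomp Require Import zify.
From Stdlib Require Import Classical ClassicalEpsilon FunctionalExtensionality.
Set Implicit Arguments. Unset Strict Implicit. Unset Printing Implicit Defensive.
Import Order.TTheory GRing.Theory Num.Theory.
Local Open Scope ring_scope.

(* Since [x] acts locally nilpotently, [exp (t x_V)] is a finite sum and every matrix
   coefficient [t |-> phi (exp (t x) v)] is a polynomial in [t]. In characteristic 0 the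
   binomial and Leibniz formulas make [exp (t x)] additive in [t] and compatible with
   tensor products, so [t |-> exp (t x)] is a monoid morphism into [M].
   Pick [w] with [x w <> 0 = x (x w)] and [phi] with [phi (x w) <> 0]: the coefficient
   [h m = (phi (m w) - phi w) / phi (x w)] restricts to [t] on [U_x]. Coefficients are
   closed under sums and products (direct sums and tensor products), so every polynomial
   in [t] is one, and each coefficient [f] agrees on [U_x] with some [q_f (h)]. Hence [U_x]
   is the zero set of the [f - q_f (h)], and differentiating them along [y] in [Lie(U_x)]
   gives [y = delta_y(h) x].
   For integrability, the shift on [F^(n+1)] shows that every element of [M(F x)] acts on
   a vector [u] as a polynomial in [x]; so a coefficient vanishing on all [exp (t x)]
   vanishes on [M(F x)]. *)

Section LinearMaps.
Variable F : fieldType.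
Implicit Types U V W : lmodType F.

Lemma islin0 U V (f : U -> V) : islin f -> f 0 = 0.
Proof.
move=> Hf; have := Hf 1 0 0; rewrite !scale1r addr0 => /(congr1 (fun z => z - f 0)).
by rewrite /= subrr addrK => <-.
Qed.

Lemma islinD U V (f : U -> V) : islin f -> forall u v, f (u + v) = f u + f v.
Proof. by move=> Hf u v; have := Hf 1 u v; rewrite !scale1r. Qed.

Lemma islinZ U V (f : U -> V) : islin f -> forall a u, f (a *: u) = a *: f u.
Proof. by move=> Hf a u; rewrite -[a *: u]addr0 Hf (islin0 Hf) addr0. Qed.

Lemma islinB U V (f : U -> V) : islin f -> forall u v, f (u - v) = f u - f v.
Proof. by move=> Hf u v; rewrite islinD // -scaleN1r islinZ // scaleN1r. Qed.

Lemma islin_sum U V (f : U -> V) : islin f ->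
  forall (I : Type) (r : seq I) (P : pred I) (G : I -> U),
  f (\sum_(i <- r | P i) G i) = \sum_(i <- r | P i) f (G i).
Proof. by move=> Hf I r P G; apply: (big_morph f (islinD Hf) (islin0 Hf)). Qed.

Lemma islin_comp U V W (f : U -> V) (g : V -> W) :
  islin f -> islin g -> islin (fun u => g (f u)).
Proof. by move=> Hf Hg a u v; rewrite Hf Hg. Qed.

Lemma islin_iter U (f : U -> U) : islin f -> forall k, islin (iter k f).
Proof. by move=> Hf; elim=> [|k IH] a u v //=; rewrite IH Hf. Qed.

Lemma islinF_lin U (phi : U -> F) : islinF phi -> @islin F U F^o phi.
Proof. by []. Qed.

Lemma islinF0 U (phi : U -> F) : islinF phi -> phi 0 = 0.
Proof. by move/islinF_lin/islin0. Qed.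

Lemma islinFD U (phi : U -> F) : islinF phi -> forall u v, phi (u + v) = phi u + phi v.
Proof. by move/islinF_lin/islinD. Qed.

Lemma islinFZ U (phi : U -> F) : islinF phi -> forall a u, phi (a *: u) = a * phi u.
Proof. by move/islinF_lin/islinZ. Qed.

Lemma islinFB U (phi : U -> F) : islinF phi -> forall u v, phi (u - v) = phi u - phi v.
Proof. by move/islinF_lin/islinB. Qed.

Lemma islinF_sum U (phi : U -> F) : islinF phi ->
  forall (I : Type) (r : seq I) (P : pred I) (G : I -> U),
  phi (\sum_(i <- r | P i) G i) = \sum_(i <- r | P i) phi (G i).
Proof. by move/islinF_lin/islin_sum. Qed.

End LinearMaps.

Section NilpotentExponential.
Variable F : fieldType.
Implicit Types U V W T : lmodType F.

Lemma iter_eq0_leq U (f : U -> U) n m v :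
  islin f -> iter n f v = 0 -> (n <= m)%N -> iter m f v = 0.
Proof.
move=> Hf Hn Hnm; rewrite -(subnK Hnm) iterD Hn; exact/islin0/islin_iter.
Qed.

Lemma iter_intertwine U V (f : U -> U) (g : V -> V) (al : U -> V) :
  (forall u, al (f u) = g (al u)) -> forall k u, al (iter k f u) = iter k g (al u).
Proof. by move=> Hc; elim=> [|k IH] u //=; rewrite Hc IH. Qed.

Lemma sum_iter_trunc U (f : U -> U) (c : nat -> F) v n m : islin f ->
  iter n f v = 0 -> (n <= m)%N ->
  \sum_(k < m) c k *: iter k f v = \sum_(k < n) c k *: iter k f v.
Proof.
move=> Hf Hn Hnm; rewrite -!(big_mkord xpredT (fun k => c k *: iter k f v)).
rewrite (big_cat_nat (leq0n n) Hnm) /= [X in _ + X]big1_seq ?addr0 // => k.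
by rewrite mem_index_iota => /andP[_ /andP[Hk _]]; rewrite (iter_eq0_leq Hf Hn Hk) scaler0.
Qed.

Lemma expoE U (f : U -> U) t v n : islin f -> iter n f v = 0 ->
  expo f t v = \sum_(k < n) (t ^+ k / k`!%:R) *: iter k f v.
Proof.
move=> Hf Hn; rewrite /expo /nilidx.
case: excluded_middle_informative => [E|[]]; last by exists n; apply/eqP.
pose c k := t ^+ k / k`!%:R.
rewrite -(sum_iter_trunc c Hf (eqP (xchooseP E)) (leq_maxl (xchoose E) n)).
by rewrite (sum_iter_trunc c Hf Hn (leq_maxr (xchoose E) n)).
Qed.

Lemma expo_lin U (f : U -> U) t : islin f -> locnil f -> islin (expo f t).
Proof.
move=> Hf Hnil a u v; have [m Hu] := Hnil u; have [k Hv] := Hnil v.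
have Hu' := iter_eq0_leq Hf Hu (leq_maxl m k).
have Hv' := iter_eq0_leq Hf Hv (leq_maxr m k).
have Huv : iter (maxn m k) f (a *: u + v) = 0.
  by rewrite islin_iter // Hu' Hv' scaler0 addr0.
rewrite !(expoE t Hf Hu') (expoE t Hf Hv') (expoE t Hf Huv) scaler_sumr -big_split.
by apply: eq_bigr => j _; rewrite islin_iter // scalerDr !scalerA mulrC.
Qed.

Lemma expo_ker U (f : U -> U) t v : islin f -> f v = 0 -> expo f t v = v.
Proof.
move=> Hf Hv; rewrite (expoE t (n := 1) Hf Hv) big_ord1 /=.
by rewrite expr0 divr1 scale1r.
Qed.

Lemma expo_sq0 U (f : U -> U) t v : islin f -> f (f v) = 0 ->
  expo f t v = v + t *: f v.
Proof.
move=> Hf Hv; rewrite (expoE t (n := 2) Hf Hv) !big_ord_recl big_ord0 /=.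
by rewrite addr0 expr0 expr1 !divr1 scale1r.
Qed.

Lemma expo0 U (f : U -> U) v : islin f -> locnil f -> expo f 0 v = v.
Proof.
move=> Hf Hnil; have [n Hv] := Hnil v.
rewrite (expoE 0 Hf (iter_eq0_leq Hf Hv (leqnSn n))) big_ord_recl /=.
rewrite expr0 divr1 scale1r big1 ?addr0 // => i _.
by rewrite expr0n /= mul0r scale0r.
Qed.

Lemma expo_intertwine U V (f : U -> U) (g : V -> V) (al : U -> V) t v :
  islin f -> islin g -> islin al -> locnil f ->
  (forall u, al (f u) = g (al u)) -> al (expo f t v) = expo g t (al v).
Proof.
move=> Hf Hg Hal Hnil Hc; have [n Hv] := Hnil v.
have Hv' : iter n g (al v) = 0 by rewrite -(iter_intertwine Hc) Hv islin0.
rewrite (expoE t Hf Hv) (expoE t Hg Hv') islin_sum //.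
by apply: eq_bigr => k _; rewrite islinZ // (iter_intertwine Hc).
Qed.

Lemma expo_horner U (f : U -> U) (phi : U -> F) v n t : islin f -> islinF phi ->
  iter n f v = 0 ->
  phi (expo f t v) = (\poly_(k < n) (phi (iter k f v) / k`!%:R)).[t].
Proof.
move=> Hf Hphi Hv; rewrite (expoE t Hf Hv) horner_poly islinF_sum //.
by apply: eq_bigr => k _; rewrite islinFZ // mulrC mulrA mulrAC.
Qed.

Lemma sum_antidiagonal (Z : zmodType) (G : nat -> nat -> Z) N :
  \sum_(k < N) \sum_(i < k.+1) G i (k - i)%N = \sum_(i < N) \sum_(j < N - i) G i j.
Proof.
elim: N => [|N IH]; first by rewrite !big_ord0.
rewrite big_ord_recr /= IH [RHS]big_ord_recr [X in _ + X]big_ord_recr /=.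
have -> : \sum_(i < N) \sum_(j < N.+1 - i) G i j =
    \sum_(i < N) \sum_(j < N - i) G i j + \sum_(i < N) G i (N - i)%N.
  rewrite -big_split; apply: eq_bigr => i _ /=.
  by rewrite subSn ?(ltnW (ltn_ord i)) // big_ord_recr.
by rewrite subSnn subnn big_ord1 addrA.
Qed.

Lemma sum_antidiagonal_square (Z : zmodType) (G : nat -> nat -> Z) n :
  (forall i j, (n <= i)%N -> G i j = 0) -> (forall i j, (n <= j)%N -> G i j = 0) ->
  \sum_(k < n + n) \sum_(i < k.+1) G i (k - i)%N = \sum_(i < n) \sum_(j < n) G i j.
Proof.
move=> Gi Gj; rewrite sum_antidiagonal big_split_ord /= [X in _ + X]big1 ?addr0; last first.
  by move=> i _; apply: big1 => j _; apply: Gi; rewrite /= leq_addr.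
apply: eq_bigr => i _ /=; rewrite -addnBA ?(ltnW (ltn_ord i)) // big_split_ord /=.
by rewrite [X in _ + X]big1 ?addr0 // => j _; apply: Gj; rewrite /= leq_addr.
Qed.

Lemma iter_leibniz U W T (f : U -> U) (g : W -> W) (h : T -> T) (b : U -> W -> T) :
  islin h -> isbilin b -> (forall u w, h (b u w) = b (f u) w + b u (g w)) ->
  forall k u w, iter k h (b u w) =
    \sum_(i < k.+1) 'C(k, i)%:R *: b (iter i f u) (iter (k - i) g w).
Proof.
move=> Hh [Hbl Hbr] Hr; elim=> [|k IH] u w.
  by rewrite big_ord_recl big_ord0 /= addr0 bin0 scale1r.
rewrite iterS IH islin_sum //.
under eq_bigr do rewrite islinZ // Hr scalerDr.
rewrite big_split /= [RHS]big_ord_recl /= bin0 scale1r.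
under [in RHS]eq_bigr do rewrite add0n binS natrD scalerDl subSS.
rewrite big_split /=.
rewrite [in RHS](addrC (\sum_(i < k.+1) 'C(k, i.+1)%:R *: _)) [in RHS]addrCA.
congr (_ + _); rewrite big_ord_recl /= bin0 subn0 scale1r; congr (_ + _).
rewrite [RHS]big_ord_recr /= bin_small // scale0r addr0.
by apply: eq_bigr => i _; rewrite add0n -[bump 0 i]/i.+1 -!iterS subnSK.
Qed.

End NilpotentExponential.

Section CharZero.
Variable F : fieldType.
Hypothesis HF : [pchar F] =i pred0.
Implicit Types U V W T : lmodType F.

Lemma natf_neq0_pchar0 n : (0 < n)%N -> n%:R != 0 :> F.
Proof. by rewrite ((pcharf0P F).1 HF n) -lt0n. Qed.

Lemma natf_inj_pchar0 : injective (fun n : nat => n%:R : F).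
Proof.
move=> i j /= Eij; wlog Hji : i j Eij / (j <= i)%N.
  by move=> W; case: (leqP j i) => [/(W _ _ Eij)|/ltnW/(W _ _ (esym Eij))/esym].
have : (i - j)%:R == 0 :> F by rewrite natrB // Eij subrr.
by rewrite ((pcharf0P F).1 HF) subn_eq0 => Hij; apply/eqP; rewrite eqn_leq Hij.
Qed.

Lemma fact_neq0_pchar0 n : n`!%:R != 0 :> F.
Proof. exact/natf_neq0_pchar0/fact_gt0. Qed.

Lemma binomial_div_fact (s t : F) i k : (i <= k)%N ->
  s ^+ i * t ^+ (k - i) * 'C(k, i)%:R / k`!%:R =
  s ^+ i / i`!%:R * (t ^+ (k - i) / (k - i)`!%:R).
Proof.
move=> Hik; have Hbin : 'C(k, i)%:R != 0 :> F by rewrite natf_neq0_pchar0 // bin_gt0.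
rewrite -(bin_fact Hik) !natrM !invfM !mulrA mulfK //.
by rewrite [_ * t ^+ _ / _]mulrAC.
Qed.

Lemma sum_exp_cauchy V (s t : F) (X : nat -> nat -> V) n :
  (forall i j, (n <= i)%N -> X i j = 0) -> (forall i j, (n <= j)%N -> X i j = 0) ->
  \sum_(k < n + n) \sum_(i < k.+1)
     (s ^+ i * t ^+ (k - i) * 'C(k, i)%:R / k`!%:R) *: X i (k - i)%N =
  \sum_(i < n) \sum_(j < n) (s ^+ i / i`!%:R * (t ^+ j / j`!%:R)) *: X i j.
Proof.
move=> Xi Xj.
rewrite -(sum_antidiagonal_square (G := fun i j => (s ^+ i / i`!%:R * (t ^+ j / j`!%:R)) *: X i j)); last 2 first.
- by move=> i j /Xi ->; rewrite scaler0.
- by move=> i j /Xj ->; rewrite scaler0.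
apply: eq_bigr => k _; apply: eq_bigr => i _.
by rewrite binomial_div_fact // -ltnS.
Qed.

Lemma expoD U (f : U -> U) s t v : islin f -> locnil f ->
  expo f (s + t) v = expo f s (expo f t v).
Proof.
move=> Hf Hnil; have [n Hv] := Hnil v.
have Hvt : iter n f (expo f t v) = 0.
  rewrite (expo_intertwine _ _ Hf Hf (islin_iter Hf n) Hnil) => [|u]; last first.
    by rewrite -iterSr iterS.
  by rewrite Hv (islin0 (expo_lin t Hf Hnil)).
rewrite (expoE _ Hf (iter_eq0_leq Hf Hv (leq_addr n n))) (expoE s Hf Hvt) (expoE t Hf Hv).
transitivity (\sum_(k < n + n) \sum_(i < k.+1)
  (s ^+ i * t ^+ (k - i) * 'C(k, i)%:R / k`!%:R) *: iter (i + (k - i)) f v).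
  apply: eq_bigr => k _; rewrite addrC exprDn mulr_suml scaler_suml.
  apply: eq_bigr => i _; have Hik : (i <= k)%N by rewrite -ltnS.
  by rewrite subnKC // mulr_natr [t ^+ _ * _]mulrC.
rewrite (@sum_exp_cauchy _ s t (fun i j => iter (i + j) f v) n) => [|i j Hi|i j Hj]; last 2 first.
- by rewrite (iter_eq0_leq Hf Hv) // (leq_trans Hi (leq_addr _ _)).
- by rewrite (iter_eq0_leq Hf Hv) // (leq_trans Hj (leq_addl _ _)).
apply: eq_bigr => i _; rewrite (islin_sum (islin_iter Hf i)) scaler_sumr.
by apply: eq_bigr => j _; rewrite (islinZ (islin_iter Hf i)) scalerA iterD.
Qed.

Lemma expo_tensor U W T (f : U -> U) (g : W -> W) (h : T -> T) (b : U -> W -> T) t u w :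
  islin f -> islin g -> islin h -> locnil f -> locnil g -> isbilin b ->
  (forall u w, h (b u w) = b (f u) w + b u (g w)) ->
  expo h t (b u w) = b (expo f t u) (expo g t w).
Proof.
move=> Hf Hg Hh Hnf Hng Hb Hr; have [Hbl Hbr] := Hb.
have [n1 Hu1] := Hnf u; have [n2 Hw2] := Hng w; set n := maxn n1 n2.
have Hu := iter_eq0_leq Hf Hu1 (leq_maxl n1 n2).
have Hw := iter_eq0_leq Hg Hw2 (leq_maxr n1 n2).
pose X i j := b (iter i f u) (iter j g w).
have Xi i j : (n <= i)%N -> X i j = 0.
  by move=> /(iter_eq0_leq Hf Hu) Hi; rewrite /X Hi (islin0 (Hbl _)).
have Xj i j : (n <= j)%N -> X i j = 0.
  by move=> /(iter_eq0_leq Hg Hw) Hj; rewrite /X Hj (islin0 (Hbr _)).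
have Hz : iter (n + n) h (b u w) = 0.
  rewrite (iter_leibniz Hh Hb Hr); apply: big1 => i _.
  case: (leqP n i) => [/Xi|Hi]; first by rewrite /X => ->; rewrite scaler0.
  by rewrite [b _ _]Xj ?scaler0 // -addnBA ?leq_addr // ltnW.
rewrite (expoE t Hh Hz) (expoE t Hf Hu) (expoE t Hg Hw).
transitivity (\sum_(k < n + n) \sum_(i < k.+1)
  (t ^+ i * t ^+ (k - i) * 'C(k, i)%:R / k`!%:R) *: X i (k - i)%N).
  apply: eq_bigr => k _; rewrite (iter_leibniz Hh Hb Hr) scaler_sumr.
  apply: eq_bigr => i _; have Hik : (i <= k)%N by rewrite -ltnS.
  by rewrite scalerA -exprD subnKC // mulrAC.
rewrite sum_exp_cauchy // (islin_sum (Hbl _)); apply: eq_bigr => i _.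
rewrite (islinZ (Hbl _)) (islin_sum (Hbr _)) scaler_sumr; apply: eq_bigr => j _.
by rewrite (islinZ (Hbr _)) scalerA.
Qed.

Lemma poly_eq_horner (p q : {poly F}) : (forall t, p.[t] = q.[t]) -> p = q.
Proof.
move=> Epq; apply/eqP; rewrite -subr_eq0; apply/negPn/negP => Hpq.
pose rs := [seq i%:R : F | i <- iota 0 (size (p - q))].
have Hroots : all (root (p - q)) rs.
  by apply/allP => z /mapP[i _ ->]; rewrite /root hornerD hornerN Epq subrr.
have Hrs : uniq rs by rewrite map_inj_uniq ?iota_uniq //; apply: natf_inj_pchar0.
by have := max_poly_roots Hpq Hroots Hrs; rewrite size_map size_iota ltnn.
Qed.

End CharZero.

Section CyclicModule.
Variable F : fieldType.

Lemma inspan_nth (V : lmodType F) (s : seq V) i : (i < size s)%N -> inspan s s`_i.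
Proof.
move=> Hi; exists (fun j : 'I_(size s) => ((j : nat) == i)%:R).
rewrite (bigD1 (Ordinal Hi)) //= eqxx scale1r big1 ?addr0 // => j Hj.
suff /negbTE -> : (j : nat) != i by rewrite scale0r.
by apply: contra Hj => /eqP Hj; apply/eqP/val_inj.
Qed.

Lemma inspan0 (V : lmodType F) (s : seq V) : inspan s 0.
Proof. by exists (fun _ => 0); rewrite big1 // => j _; rewrite scale0r. Qed.

Lemma locnil_locfin (V : lmodType F) (f : V -> V) : islin f -> locnil f -> locfin f.
Proof.
move=> Hf Hnil v; have [n Hv] := Hnil v.
pose s := mkseq (fun k => iter k f v) n.+1.
have Hs k : (k <= n)%N -> inspan s (iter k f v).
  rewrite -ltnS => Hk; rewrite -(nth_mkseq 0 (fun k => iter k f v) Hk).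
  by apply: inspan_nth; rewrite size_mkseq.
exists s; split; first exact: (Hs 0%N).
move=> _ /mapP[k _ ->]; rewrite -iterS.
by case: (ltnP k n) => [/Hs|/leqW/(iter_eq0_leq Hf Hv) ->] //; apply: inspan0.
Qed.

Lemma findim_rV n : findim 'rV[F]_n.+1.
Proof.
exists (mkseq (fun k => delta_mx 0 (inord k)) n.+1) => v.
exists (fun i => v 0 (inord i)); rewrite [LHS]row_sum_delta size_mkseq.
by apply: eq_bigr => i _; rewrite nth_mkseq // inord_val.
Qed.

Variable n : nat.

Definition shift_rV (c : 'rV[F]_n.+1) : 'rV[F]_n.+1 :=
  \row_(j < n.+1) (if (j : nat) is k.+1 then c 0 (inord k) else 0).

Lemma shift_rV_lin : islin shift_rV.
Proof.
move=> a c d; apply/rowP => j; rewrite !mxE.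
by case: j => [[|k] Hj] /=; rewrite ?mulr0 ?addr0 // !mxE.
Qed.

Variables (U : lmodType F) (E : U -> U) (u : U).
Hypothesis HE : islin E.

Definition orbit_comb (c : 'rV[F]_n.+1) : U := \sum_(k < n.+1) c 0 k *: iter k E u.

Lemma orbit_comb_lin : islin orbit_comb.
Proof.
move=> a c d; rewrite /orbit_comb scaler_sumr -big_split; apply: eq_bigr => k _.
by rewrite !mxE scalerDl scalerA.
Qed.

Lemma orbit_comb_delta0 : orbit_comb (delta_mx 0 ord0) = u.
Proof.
rewrite /orbit_comb big_ord_recl mxE !eqxx /= scale1r big1 ?addr0 // => j _.
by rewrite !mxE eqxx andTb eq_sym (negbTE (neq_lift _ _)) scale0r.
Qed.

Lemma orbit_comb_shift c : iter n.+1 E u = 0 -> orbit_comb (shift_rV c) = E (orbit_comb c).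
Proof.
move=> Hnz; rewrite /orbit_comb big_ord_recl mxE scale0r add0r (islin_sum HE).
rewrite big_ord_recr /= (islinZ HE) -iterS Hnz scaler0 addr0.
apply: eq_bigr => j _; rewrite (islinZ HE) mxE /=.
suff -> : inord (0 + j) = widen_ord (leqnSn n) j by [].
by apply: val_inj; rewrite /= add0n inordK // ltnS ltnW.
Qed.

Lemma orbit_comb_inj : iter n.+1 E u = 0 -> iter n E u != 0 -> injective orbit_comb.
Proof.
move=> Hnz Hmin c1 c2 E12; apply/eqP; rewrite -subr_eq0; apply/eqP.
have : orbit_comb (c1 - c2) = 0 by rewrite (islinB orbit_comb_lin) E12 subrr.
move: (c1 - c2) => d Hd.
suff Hk k : (k < n.+1)%N -> d 0 (inord k) = 0.
  by apply/rowP => j; rewrite mxE -(Hk j (ltn_ord j)) inord_val.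
elim/ltn_ind: k => k IH Hk; have Hit := islin_iter HE (n - k).
have : iter (n - k) E (orbit_comb d) = 0 by rewrite Hd (islin0 Hit).
rewrite /orbit_comb (islin_sum Hit) (bigD1 (inord k)) //= big1 ?addr0.
  rewrite (islinZ Hit) -iterD inordK // subnK; last by rewrite -ltnS.
  by move/eqP; rewrite scaler_eq0 (negbTE Hmin) orbF => /eqP.
move=> j Hj; rewrite (islinZ Hit) -iterD.
case: (ltngtP j k) => Hjk.
- by rewrite -[j]inord_val IH ?scale0r.
- by rewrite (iter_eq0_leq HE Hnz) ?scaler0 //; have := ltn_ord j; lia.
- by case/eqP: Hj; apply/val_inj; rewrite /= inordK.
Qed.

End CyclicModule.

Section GModules.
Variables (F : fieldType) (g : lmodType F) (br : g -> g -> g).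
Variable C : gmod br -> Prop.
Variable du : forall V : gmod br, (V -> F) -> Prop.
Arguments du : clear implicits.
Hypothesis HC : good_category C.
Hypothesis Hdu : dual_category C du.

Local Notation natfam := (natfamily (@gcar F g br)).
Local Notation isDeltag :=
  (isDelta C (@ghom F g br) (@gtensor F g br) (@gtriv F g br) du).

Lemma gact_lin (V : gmod br) z : islin (gact z : V -> V).
Proof. exact: (gact_rep V).1. Qed.

Lemma du_lin (V : gmod br) phi : C V -> du V phi -> islinF phi.
Proof. by move=> HV; apply: (Hdu.1 V HV).1. Qed.

Lemma du_scale (V : gmod br) phi a : C V -> du V phi -> du V (fun v => a * phi v).
Proof.
move=> HV Hphi; have [_ [Hdu0 [Hcomb _]]] := Hdu.1 V HV.
have -> : (fun v => a * phi v) = (fun v => a * phi v + 0).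
  by apply: functional_extensionality => v; rewrite addr0.
exact: Hcomb _ _ _ Hphi Hdu0.
Qed.

Lemma du_neq0 (V : gmod br) (v : V) : C V -> v != 0 -> exists2 phi, du V phi & phi v != 0.
Proof. by move=> HV /(Hdu.1 V HV).2.2.2.1[phi []]; exists phi. Qed.

Lemma du_separates (V : gmod br) (v : V) : C V ->
  (forall phi, du V phi -> phi v = 0) -> v = 0.
Proof.
move=> HV Hv; apply/eqP/negPn/negP => /(du_neq0 HV)[phi /Hv ->].
by rewrite eqxx.
Qed.

Lemma Mg_nat m (V W : gmod br) (al : V -> W) : Mg C du m -> C V -> C W -> ghom al ->
  forall v, al (m V v) = m W (al v).
Proof. by move=> [[_ H] _]; apply: H. Qed.

Lemma Mg_tensor m (V W T : gmod br) (b : V -> W -> T) :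
  Mg C du m -> C V -> C W -> C T -> gtensor b ->
  forall v w, m T (b v w) = b (m V v) (m W w).
Proof. by move=> [_ [H _]]; apply: H. Qed.

Lemma Mg_triv m (V : gmod br) : Mg C du m -> C V -> gtriv V -> forall v, m V v = v.
Proof. by move=> [_ [_ H]]; apply: H. Qed.

Lemma Mg_ext m m' : Mg C du m ->
  (forall V, C V -> forall v, m' V v = m V v) -> Mg C du m'.
Proof.
move=> Hm Em; split; [split|split].
- move=> V HV; have [Hlin Hdum] := Hm.1.1 V HV; split.
    by move=> a u v; rewrite !Em //; apply: Hlin.
  move=> phi Hphi; have -> : (fun v => phi (m' V v)) = (fun v => phi (m V v)).
    by apply: functional_extensionality => v; rewrite Em.
  exact: Hdum.
- by move=> V W al HV HW Hal v; rewrite !Em //; apply: (Mg_nat Hm).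
- by move=> V W T b HV HW HT Hb v w; rewrite !Em //; apply: (Mg_tensor Hm).
- by move=> V0 HV0 Ht v; rewrite Em //; apply: (Mg_triv Hm).
Qed.

Definition derivation_family (y : natfam) : Prop :=
  (forall (V W : gmod br) (al : V -> W), C V -> C W -> ghom al ->
     forall v, al (y V v) = y W (al v)) /\
  (forall (V W T : gmod br) (b : V -> W -> T), C V -> C W -> C T -> gtensor b ->
     forall v w, y T (b v w) = b (y V v) w + b v (y W w)) /\
  (forall V0 : gmod br, C V0 -> gtriv V0 -> forall v, y V0 v = 0).

Definition zerofam : natfam := fun V v => 0.

Lemma derivation_zerofam : derivation_family zerofam.
Proof.
split; [|split] => //.
- by move=> V W al _ _ [Hal _] v; rewrite /zerofam (islin0 Hal).
- move=> V W T b _ _ _ [[[Hbl Hbr] _] _] v w.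
  by rewrite /zerofam (islin0 (Hbl _)) (islin0 (Hbr _)) addr0.
Qed.

(* [coeff_jet y f e d]: [f] is, on [M], the matrix coefficient [m |-> phi (m_V v)];
   [e = phi v] is its value at the identity and [d = phi (y_V v)] its derivative
   along [y], i.e. the value [delta_y f] forced by [isDelta]. *)
Definition coeff_jet (y : natfam) (f : natfam -> F) (e d : F) : Prop :=
  exists (V : gmod br) (phi : V -> F) (v : V), C V /\ du V phi /\
    (forall m, Mg C du m -> f m = phi (m V v)) /\ e = phi v /\ d = phi (y V v).

Section Jets.
Variable y : natfam.
Arguments y : clear implicits.

Lemma jet_coeff (V : gmod br) (phi : V -> F) (v : V) : C V -> du V phi ->
  coeff_jet y (fun m => phi (m V v)) (phi v) (phi (y V v)).
Proof. by move=> HV Hphi; exists V, phi, v. Qed.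

Lemma jet_ext f f' e d : coeff_jet y f e d ->
  (forall m, Mg C du m -> f' m = f m) -> coeff_jet y f' e d.
Proof.
move=> [V [phi [v [HV [Hphi [Hf He]]]]]] Ef.
exists V, phi, v; split; [done | split; [done | split; [|done]]].
by move=> m Hm; rewrite Ef // Hf.
Qed.

Lemma jet_coord f e d : coeff_jet y f e d -> coordg C du f.
Proof. by move=> [V [phi [v [HV [Hphi [Hf _]]]]]]; exists V, phi, v. Qed.

Lemma jet_delta delta f e d : isDeltag y delta -> coeff_jet y f e d -> delta f = d.
Proof.
move=> [Hwd Hval] Hjet; have [V [phi [v [HV [Hphi [Hf [_ ->]]]]]]] := Hjet.
rewrite -(Hval V phi v HV Hphi); apply: Hwd (jet_coord Hjet) _ Hf.
by exists V, phi, v.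
Qed.

Lemma jetZ f e d a : coeff_jet y f e d ->
  coeff_jet y (fun m => a * f m) (a * e) (a * d).
Proof.
move=> [V [phi [v [HV [Hphi [Hf [-> ->]]]]]]].
exists V, (fun v => a * phi v), v; do !split => //; first exact: du_scale.
by move=> m Hm; rewrite Hf.
Qed.

Hypothesis Hy : derivation_family y.

Lemma jetD f1 f2 e1 e2 d1 d2 : coeff_jet y f1 e1 d1 -> coeff_jet y f2 e2 d2 ->
  coeff_jet y (fun m => f1 m + f2 m) (e1 + e2) (d1 + d2).
Proof.
move=> [V [phi [v [HV [Hphi [Hf1 [-> ->]]]]]]].
move=> [W [chi [w [HW [Hchi [Hf2 [-> ->]]]]]]].
have [S [i1 [i2 [p1 [p2 [HS Hsum]]]]]] := HC.2.1 V W HV HW.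
have [Hi1 [Hi2 [Hp1 [Hp2 [E11 [E22 [E12 [E21 _]]]]]]]] := Hsum.
have P1 : p1 (i1 v + i2 w) = v by rewrite (islinD Hp1.1) E11 E12 addr0.
have P2 : p2 (i1 v + i2 w) = w by rewrite (islinD Hp2.1) E21 E22 add0r.
exists S, (fun s => phi (p1 s) + chi (p2 s)), (i1 v + i2 w).
split; first done; split; [|split; [|split]].
- by apply/(Hdu.2.2.1 V W S i1 i2 p1 p2 HV HW HS Hsum); exists phi, chi.
- by move=> m Hm; rewrite (Mg_nat Hm HS HV Hp1) (Mg_nat Hm HS HW Hp2) P1 P2 Hf1 ?Hf2.
- by rewrite P1 P2.
- by rewrite (Hy.1 _ _ _ HS HV Hp1) (Hy.1 _ _ _ HS HW Hp2) P1 P2.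
Qed.

Lemma jetM f1 f2 e1 e2 d1 d2 : coeff_jet y f1 e1 d1 -> coeff_jet y f2 e2 d2 ->
  coeff_jet y (fun m => f1 m * f2 m) (e1 * e2) (d1 * e2 + e1 * d2).
Proof.
move=> [V [phi [v [HV [Hphi [Hf1 [-> ->]]]]]]].
move=> [W [chi [w [HW [Hchi [Hf2 [-> ->]]]]]]].
have [T [b [HT Hb]]] := HC.2.2.1 V W HV HW.
have [[_ [Hfactor _]] _] := Hb.
have Lphi := du_lin HV Hphi; have Lchi := du_lin HW Hchi.
have Hprod : @isbilin F V W F^o (fun v w => phi v * chi w).
  split=> [w' a u u'|u a w1 w2] /=.
    by rewrite (islinFD Lphi) (islinFZ Lphi) mulrDl -mulrA.
  by rewrite (islinFD Lchi) (islinFZ Lchi) mulrDr mulrCA.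
have [L [HL HLb]] := Hfactor _ _ Hprod.
exists T, L, (b v w); split; first done; split; [|split; [|split]].
- exact: (Hdu.2.2.2 V W T b HV HW HT Hb phi chi L Hphi Hchi HL HLb).
- by move=> m Hm; rewrite (Mg_tensor Hm HV HW HT Hb) HLb Hf1 ?Hf2.
- by rewrite HLb.
- by rewrite (Hy.2.1 _ _ _ _ HV HW HT Hb) (islinD HL) !HLb.
Qed.

Lemma jet_const c : coeff_jet y (fun _ => c) c 0.
Proof.
have [V0 [HV0 Htriv]] := HC.2.2.2.1; have [[v0 [Hv0 _]] _] := Htriv.
have [phi Hphi Hphiv] := du_neq0 HV0 Hv0.
have := jetZ (c / phi v0) (jet_coeff v0 HV0 Hphi); rewrite divfK // Hy.2.2 //.
rewrite (islinF0 (du_lin HV0 Hphi)) mulr0 => /jet_ext; apply=> m Hm.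
by rewrite (Mg_triv Hm HV0 Htriv) divfK.
Qed.

(* The Leibniz rules for sums and products give the chain rule for polynomials. *)
Lemma jet_poly h eh dh (p : {poly F}) : coeff_jet y h eh dh ->
  coeff_jet y (fun m => p.[h m]) p.[eh] (p^`().[eh] * dh).
Proof.
move=> Hh; elim/poly_ind: p => [|p c IH].
  by rewrite deriv0 !horner0 mul0r; apply: (jet_ext (jet_const 0)) => m _; rewrite horner0.
have := jetD (jetM IH Hh) (jet_const c).
rewrite hornerMXaddC derivMXaddC hornerD hornerMX addr0 mulrDl mulrAC.
by rewrite [p.[eh] * dh + _]addrC => /jet_ext; apply=> m _; rewrite hornerMXaddC.
Qed.

End Jets.

Section OneParameterSubgroup.
Hypothesis HF : [pchar F] =i pred0.
Variable x : g.
Hypothesis hx : x != 0.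
Hypothesis Hnil : forall V : gmod br, C V -> locnil (gact x : V -> V).
Hypothesis Hexp : forall V : gmod br, C V -> forall t : F,
  @EndDu F (gmod br) (@gcar F g br) du V (expo (gact x : V -> V) t).

Lemma expfam_Mg t : Mg C du (expfam br x t).
Proof.
split; [split|split].
- by move=> V HV; apply: Hexp.
- move=> V W al HV HW [Hal Hc] v; rewrite /expfam.
  exact: (expo_intertwine _ _ (gact_lin x) (gact_lin x) Hal (Hnil HV) (Hc x)).
- move=> V W T b HV HW HT [[Hb _] Hr] v w; rewrite /expfam.
  exact: (expo_tensor HF _ _ _ (gact_lin x) (gact_lin x) (gact_lin x)
    (Hnil HV) (Hnil HW) Hb (Hr x)).
- by move=> V0 HV0 [_ Hx0] v; apply: expo_ker; [apply: gact_lin | apply: Hx0].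
Qed.

Lemma Ufam_Mg m : Ufam C x m -> Mg C du m.
Proof. by move=> [t Ht]; apply: (Mg_ext (expfam_Mg t)). Qed.

Lemma coord_Ufam f m : coordg C du f -> Ufam C x m -> exists t, f m = f (expfam br x t).
Proof.
move=> [V [phi [v [HV [_ Hf]]]]] Hm; have [t Ht] := Hm; exists t.
by rewrite (Hf _ (Ufam_Mg Hm)) (Hf _ (expfam_Mg t)) /coordfun Ht.
Qed.

Lemma coeff_expfam_poly (V : gmod br) (phi : V -> F) (v : V) : C V -> du V phi ->
  exists2 q : {poly F}, (forall t, phi (expfam br x t V v) = q.[t]) & q`_1 = phi (gact x v).
Proof.
move=> HV Hphi; have Lphi := du_lin HV Hphi; have [n Hn] := Hnil HV v.
exists (\poly_(k < n) (phi (iter k (gact x) v) / k`!%:R)).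
  by move=> t; rewrite /expfam (expo_horner _ (gact_lin x) Lphi Hn).
rewrite coef_poly; case: ltnP => [_|Hn1]; first by rewrite /= divr1.
by rewrite -[gact x v]/(iter 1 (gact x) v) (iter_eq0_leq (gact_lin x) Hn Hn1) islinF0.
Qed.

Lemma coord_expfam_poly f : coordg C du f ->
  exists p : {poly F}, forall t, f (expfam br x t) = p.[t].
Proof.
move=> [V [phi [v [HV [Hphi Hf]]]]]; have [q Hq _] := coeff_expfam_poly v HV Hphi.
by exists q => t; rewrite (Hf _ (expfam_Mg t)) /coordfun Hq.
Qed.

Lemma exists_sqzero : exists (V : gmod br) (w : V),
  [/\ C V, gact x w != 0 & gact x (gact x w) = 0].
Proof.
have [V [v [HV Hxv]]] : exists (V : gmod br) (v : V), C V /\ gact x v != 0.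
  apply: NNPP => Hno; move/eqP: hx; apply; apply: HC.2.2.2.2 => V HV v.
  by apply/eqP/negPn/negP => Hxv; apply: Hno; exists V, v.
have [n Hn] := Hnil HV v.
have Pex : exists k, iter k.+2 (gact x) v == 0.
  by exists n; rewrite (iter_eq0_leq (gact_lin x) Hn) // -addn2 leq_addr.
case: (ex_minnP Pex) => k /eqP Hk Hmin; exists V, (iter k (gact x) v).
split=> //; rewrite -?iterS //; case: k Hk Hmin => [|k] _ Hmin //.
by apply/negP => /Hmin; rewrite ltnn.
Qed.

(* Along [x w] with [x (x w) = 0], the coefficient [(phi (m w) - phi w) / phi (x w)]
   reads off the parameter [t] of [exp (t x)]. *)
Lemma time_coord : exists h : natfam -> F,
  (forall y, derivation_family y -> exists dh, coeff_jet y h 0 dh) /\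
  forall t, h (expfam br x t) = t.
Proof.
have [V [w [HV Hxw Hxxw]]] := exists_sqzero.
have [phi Hphi Hphixw] := du_neq0 HV Hxw; have Lphi := du_lin HV Hphi.
exists (fun m => (phi (m V w) - phi w) / phi (gact x w)); split.
  move=> y Hy; have := jetZ (phi (gact x w))^-1
    (jetD Hy (jet_coeff y w HV Hphi) (jet_const Hy (- phi w))).
  by rewrite subrr mulr0 => /jet_ext Hjet; eexists; apply: Hjet => m _; rewrite mulrC.
move=> t; rewrite /expfam (expo_sq0 _ (gact_lin x) Hxxw).
by rewrite (islinFD Lphi) (islinFZ Lphi) addrAC subrr add0r mulfK.
Qed.

Lemma poly_coord_expfam (p : {poly F}) :
  exists2 f, coordg C du f & forall t, f (expfam br x t) = p.[t].
Proof.
have [h [Hh Ht]] := time_coord; have [dh Hdh] := Hh _ derivation_zerofam.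
exists (fun m => p.[h m]); first exact: jet_coord (jet_poly derivation_zerofam p Hdh).
by move=> t; rewrite Ht.
Qed.

Lemma expfam_inj s t :
  (forall V : gmod br, C V -> forall v : V, expfam br x s V v = expfam br x t V v) -> s = t.
Proof.
have [V [w [HV Hxw Hxxw]]] := exists_sqzero.
move/(_ V HV w); rewrite /expfam !(expo_sq0 _ (gact_lin x) Hxxw) => /addrI/eqP.
by rewrite -subr_eq0 -scalerBl scaler_eq0 (negbTE Hxw) orbF subr_eq0 => /eqP.
Qed.

(* The coefficient separating [M] from [U_x]: it vanishes on [U_x], and its derivative
   along [y] compares [y_V] with [x_V]. *)
Lemma jet_coeff_sub_poly y h dh (V : gmod br) (phi : V -> F) (v : V) :
  derivation_family y -> coeff_jet y h 0 dh -> (forall t, h (expfam br x t) = t) ->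
  C V -> du V phi ->
  exists G, [/\ coeff_jet y G 0 (phi (y V v) - phi (gact x v) * dh),
    forall t, G (expfam br x t) = 0 &
    forall m, Mg C du m -> G m = phi (m V v) - phi (expfam br x (h m) V v)].
Proof.
move=> Hy Hh Ht HV Hphi; have [q Hq Hq1] := coeff_expfam_poly v HV Hphi.
have Hq0 : q.[0] = phi v by rewrite -Hq /expfam expo0 //; [apply: gact_lin | apply: Hnil].
have := jetD Hy (jet_coeff y v HV Hphi) (jetZ (-1) (jet_poly Hy q Hh)).
rewrite Hq0 horner_coef0 coef_deriv Hq1 mulr1n !mulN1r subrr => Hjet.
exists (fun m => phi (m V v) + -1 * q.[h m]); split=> // [t|m _].
  by rewrite Ht Hq mulN1r subrr.
by rewrite Hq mulN1r.
Qed.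

Lemma zclosed_Ufam : zclosedg C du (Ufam C x).
Proof.
have [h [Hh Ht]] := time_coord; have [dh Hdh] := Hh _ derivation_zerofam.
exists (fun f => coordg C du f /\ forall t, f (expfam br x t) = 0).
split=> [f [] //|m]; split=> [Hm|[Hm HS]].
  split=> [|f [Hf Hf0]]; first exact: Ufam_Mg.
  by have [t ->] := coord_Ufam Hf Hm.
exists (h m) => V HV v; apply/eqP; rewrite -subr_eq0; apply/eqP.
apply: (du_separates HV) => phi Hphi; rewrite (islinFB (du_lin HV Hphi)).
have [G [HG HG0 HGm]] := jet_coeff_sub_poly v derivation_zerofam Hdh Ht HV Hphi.
by rewrite -HGm //; apply: HS; split; [exact: jet_coord HG | exact: HG0].
Qed.

Lemma Lie_Ufam_sub y : Lieg C du (Ufam C x) y ->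
  exists c, forall V, C V -> forall v, y V v = c *: gact x v.
Proof.
move=> [[[_ Hnat] [Htens [Htriv _]]] [delta [Hdelta Hvan]]].
have Hy : derivation_family y by [].
have [h [Hh Ht]] := time_coord; have [dh Hdh] := Hh _ Hy.
exists dh => V HV v; apply/eqP; rewrite -subr_eq0; apply/eqP.
apply: (du_separates HV) => phi Hphi; have Lphi := du_lin HV Hphi.
have [G [HG HG0 _]] := jet_coeff_sub_poly v Hy Hdh Ht HV Hphi.
have : delta G = 0.
  apply: Hvan (jet_coord HG) _ => m Hm.
  by have [t ->] := coord_Ufam (jet_coord HG) Hm.
by rewrite (jet_delta Hdelta HG) (islinFB Lphi) (islinFZ Lphi) mulrC.
Qed.

Definition expfam_poly (f : natfam -> F) : {poly F} :=
  epsilon (inhabits 0) (fun p => forall t, f (expfam br x t) = p.[t]).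

Lemma expfam_polyP f : coordg C du f -> forall t, f (expfam br x t) = (expfam_poly f).[t].
Proof. by move/coord_expfam_poly => Hf; apply: (epsilon_spec (inhabits 0) _ Hf). Qed.

Section ScaledAction.
Variables (c : F) (y : natfam).
Arguments y : clear implicits.
Hypothesis Ey : forall V : gmod br, C V -> forall v : V, y V v = c *: gact x v.

Lemma derivation_scale_gact : derivation_family y.
Proof.
split; [|split].
- by move=> V W al HV HW [Hal Hc] v; rewrite !Ey // (islinZ Hal) Hc.
- move=> V W T b HV HW HT [[[Hbl Hbr] _] Hr] v w.
  by rewrite !Ey // Hr scalerDr -(islinZ (Hbl _)) -(islinZ (Hbr _)).
- by move=> V0 HV0 [_ Hx0] v; rewrite Ey // Hx0 scaler0.
Qed.

Lemma EndDu_scale_gact (V : gmod br) : C V -> @EndDu F (gmod br) (@gcar F g br) du V (y V).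
Proof.
move=> HV; split=> [a u v|phi Hphi].
  by rewrite !Ey // (gact_lin x) scalerDr !scalerA mulrC.
have -> : (fun v => phi (y V v)) = (fun v => c * phi (gact x v)).
  by apply: functional_extensionality => v; rewrite Ey // (islinFZ (du_lin HV Hphi)).
exact/(du_scale _ HV)/(Hdu.1 V HV).2.2.2.2.
Qed.

Lemma isDelta_scale_gact : isDeltag y (fun f => c * (expfam_poly f)`_1).
Proof.
split=> [f1 f2 Hf1 Hf2 E12|V phi v HV Hphi].
  suff -> : expfam_poly f1 = expfam_poly f2 by [].
  apply: (poly_eq_horner HF) => t.
  by rewrite -!expfam_polyP // E12 //; apply: expfam_Mg.
have [q Hq Hq1] := coeff_expfam_poly v HV Hphi.
have -> : expfam_poly (coordfun phi v) = q.
  apply: (poly_eq_horner HF) => t; rewrite -expfam_polyP -?Hq //.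
  by exists V, phi, v.
by rewrite Hq1 Ey // (islinFZ (du_lin HV Hphi)).
Qed.

Lemma Lie_Ufam_sup : Lieg C du (Ufam C x) y.
Proof.
have [Hnat [Htens Htriv]] := derivation_scale_gact.
split.
  split; first by split=> //; apply: EndDu_scale_gact.
  by do 2?split=> //; exists (fun f => c * (expfam_poly f)`_1); apply: isDelta_scale_gact.
exists (fun f => c * (expfam_poly f)`_1); split=> [|f Hf Hf0]; first exact: isDelta_scale_gact.
suff -> : expfam_poly f = 0 by rewrite coef0 mulr0.
apply: (poly_eq_horner HF) => t; rewrite horner0 -expfam_polyP //.
by apply: Hf0; exists t.
Qed.

End ScaledAction.

Local Notation sfam := (natfamily (@scar F)).

Lemma inCs_lin (U : smod F) : inCs C x U -> islin (@sE F U).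
Proof. by case. Qed.

Lemma inCs_locnil (U : smod F) : inCs C x U -> locnil (@sE F U).
Proof.
move=> [_ [_ [V [HV [io [Hio [Hinj Hc]]]]]]] u; have [n Hn] := Hnil HV (io u).
by exists n; apply: Hinj; rewrite (iter_intertwine Hc) Hn (islin0 Hio).
Qed.

Lemma Ms_ext (m m' : sfam) : Ms C x m ->
  (forall U, inCs C x U -> forall u, m' U u = m U u) -> Ms C x m'.
Proof.
move=> [[HEnd Hnat] [Htens Htriv]] Em; split; [split|split].
- move=> U HU; have [Hlin Hdum] := HEnd U HU; split.
    by move=> a u v; rewrite !Em //; apply: Hlin.
  by move=> phi Hphi a u v; rewrite /= !Em //; apply: Hdum.
- by move=> U W al HU HW Hal v; rewrite !Em //; apply: Hnat.
- by move=> U W T b HU HW HT Hb v w; rewrite !Em //; apply: Htens.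
- by move=> U HU Hu v; rewrite Em //; apply: Htriv.
Qed.

Definition sexpfam (t : F) : sfam := fun U => expo (@sE F U) t.
Arguments sexpfam : clear implicits.

Lemma sexpfam_Ms t : Ms C x (sexpfam t).
Proof.
split; [split|split].
- move=> U HU; have Hexpo := expo_lin t (inCs_lin HU) (inCs_locnil HU).
  by split=> // phi Hphi; apply: islin_comp Hexpo (islinF_lin Hphi).
- move=> U W al HU HW [Hal Hc] v.
  exact: (expo_intertwine _ _ (inCs_lin HU) (inCs_lin HW) Hal (inCs_locnil HU) Hc).
- move=> U W T b HU HW HT [[Hb _] Hr] v w.
  exact: (expo_tensor HF _ _ _ (inCs_lin HU) (inCs_lin HW) (inCs_lin HT)
    (inCs_locnil HU) (inCs_locnil HW) Hb Hr).
- by move=> U HU [_ Hu] v; apply: expo_ker; [apply: inCs_lin | apply: Hu].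
Qed.

(* The shift on [F^(n+1)] is an object of [C(F x)] mapping onto the orbit of [u];
   by naturality, [m] acts on [u] as it acts on the first basis vector. *)
Lemma Ms_orbit m (U : smod F) (u : U) : Ms C x m -> inCs C x U ->
  exists n (c : nat -> F), iter n (@sE F U) u = 0 /\
    m U u = \sum_(k < n) c k *: iter k (@sE F U) u.
Proof.
move=> Hm HU; have HE := inCs_lin HU.
have [->|Hu] := eqVneq u 0.
  exists 0%N, (fun _ => 0); rewrite big_ord0; split=> //.
  by have [Hlin _] := Hm.1.1 U HU; apply: islin0.
have [k0 Hk0] := inCs_locnil HU u.
have Pex : exists n, iter n.+1 (@sE F U) u == 0.
  by exists k0; rewrite (iter_eq0_leq HE Hk0).
case: (ex_minnP Pex) => n /eqP Hnz Hmin.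
have Hlast : iter n (@sE F U) u != 0.
  by case: n Hnz Hmin => // n _ Hmin; apply/negP => /Hmin; rewrite ltnn.
pose Z := SMod (@shift_rV F n).
have Hsh : @shom F Z U (orbit_comb (@sE F U) u).
  by split=> [|c]; [apply: orbit_comb_lin | apply: orbit_comb_shift].
have HZ : inCs C x Z.
  have [_ [_ [V [HV [io [Hio [Hinj Hc]]]]]]] := HU.
  split; [exact: shift_rV_lin | split; [exact: findim_rV | exists V; split=> //]].
  exists (fun c => io (orbit_comb (@sE F U) u c)); split; first exact: islin_comp Hsh.1 Hio.
  split=> [c1 c2 /Hinj /(orbit_comb_inj HE Hnz Hlast) //|c].
  by rewrite -Hc -Hsh.2.
exists n.+1, (fun k => m Z (delta_mx 0 ord0) 0 (inord k)); split=> //.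
rewrite -{1}(orbit_comb_delta0 n (@sE F U) u) -(Hm.1.2 Z U _ HZ HU Hsh).
by apply: eq_bigr => k _; rewrite inord_val.
Qed.

Definition sexp_sub (d : sfam) : Prop :=
  exists t, forall U, inCs C x U -> forall u, d U u = sexpfam t U u.

Lemma sexp_submonoid : submonoids C x sexp_sub.
Proof.
split; [|split].
- by move=> d [t Ht]; apply: (Ms_ext (sexpfam_Ms t)).
- by exists 0 => U HU u; rewrite /sexpfam expo0 //; [apply: inCs_lin | apply: inCs_locnil].
- move=> d1 d2 [t1 E1] [t2 E2]; exists (t1 + t2) => U HU u.
  by rewrite /compfam E1 // E2 // /sexpfam expoD //; [apply: inCs_lin | apply: inCs_locnil].
Qed.

(* A coefficient [phi (m_U u)] vanishing on all [exp (t e)] kills every [e^k u],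
   since [t |-> phi (exp (t e) u)] is the polynomial with coefficients [phi (e^k u) / k!]. *)
Lemma sexp_zdense : zdenses C x sexp_sub.
Proof.
move=> S HS HD m Hm; split=> // f Sf.
have [U [phi [u [HU [Lphi Hf]]]]] := HS f Sf.
have [n [c [Hn Hmu]]] := Ms_orbit u Hm HU.
have Hpoly : \poly_(k < n) (phi (iter k (@sE F U) u) / k`!%:R) = 0.
  apply: (poly_eq_horner HF) => t; rewrite horner0 -(expo_horner _ (inCs_lin HU) Lphi Hn).
  have := (HD _ (ex_intro _ t (fun _ _ _ => erefl))).2 f Sf.
  by rewrite (Hf _ (sexpfam_Ms t)).
rewrite (Hf m Hm) /coordfun Hmu (islinF_sum Lphi) big1 // => k _; rewrite (islinFZ Lphi).
have := congr1 (fun p : {poly F} => p`_k) Hpoly; rewrite coef_poly ltn_ord coef0.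
by move/eqP; rewrite mulf_eq0 invr_eq0 (negbTE (fact_neq0_pchar0 HF k)) orbF => /eqP ->; rewrite mulr0.
Qed.

Lemma int_loc_fin_x : int_loc_fin C du x.
Proof.
split=> [V HV|]; first exact: locnil_locfin (gact_lin x) (Hnil HV).
exists sexp_sub; split; [exact: sexp_submonoid | split; first exact: sexp_zdense].
move=> d [t Ht] V HV; exists (expo (gact x) t); split; last exact: Hexp.
move=> U io HU Hio Hinj Hc u; rewrite Ht //; symmetry.
exact: (expo_intertwine _ _ (inCs_lin HU) (gact_lin x) Hio (inCs_locnil HU) Hc).
Qed.

End OneParameterSubgroup.

End GModules.

Unset Implicit Arguments.

Theorem theorem2p35 (F : fieldType) (HF : [pchar F] =i pred0)
  (g : lmodType F) (br : g -> g -> g) (Hlie : is_lie br)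
  (C : gmod br -> Prop) (HC : good_category C)
  (du : forall V : gmod br, (V -> F) -> Prop) (Hdu : dual_category C du)
  (x : g) (hx : x != 0)
  (H1 : forall V : gmod br, C V -> locnil (gact x : V -> V))
  (H2 : forall V : gmod br, C V -> forall t : F,
          @EndDu F (gmod br) (@gcar F g br) du V (expo (gact x : V -> V) t)) :
  int_loc_fin C du x /\
  (* (a) *)
  (forall t : F, Mg C du (expfam br x t)) /\
  (* (b) u_x is a monoid morphism (F,+) -> M ... *)
  ((forall V : gmod br, C V -> forall v : V, expfam br x 0 V v = v) /\
   (forall (s t : F) (V : gmod br), C V -> forall v : V,
      expfam br x (s + t) V v = expfam br x s V (expfam br x t V v))) /\
  (* ... and a closed embedding of sets with coordinate rings *)
  ((forall s t : F, (forall V : gmod br, C V -> forall v : V,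
       expfam br x s V v = expfam br x t V v) -> s = t) /\
   (forall f, coordg C du f -> exists p : {poly F}, forall t : F,
       f (expfam br x t) = p.[t]) /\
   (forall p : {poly F}, exists f, coordg C du f /\ forall t : F,
       f (expfam br x t) = p.[t]) /\
   zclosedg C du (Ufam C x)) /\
  (* (c) Lie(U_x) = F x *)
  (forall y : natfamily (@gcar F g br), Lieg C du (Ufam C x) y <->
     exists c : F, forall V : gmod br, C V -> forall v : V,
       y V v = c *: gact x v).
Proof.
split; first exact: (int_loc_fin_x HF H1 H2).
split; first exact: (expfam_Mg HF H1 H2).
split.
  split=> [V HV v|s t V HV v]; rewrite /expfam.
    by apply: expo0; [apply: gact_lin | apply: H1].
  by apply: expoD; [| apply: gact_lin | apply: H1].
split.
  split; first exact: (expfam_inj HC hx H1).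
  split; first exact: (coord_expfam_poly Hdu HF H1 H2).
  split; last exact: (zclosed_Ufam HC Hdu HF hx H1 H2).
  by move=> p; have [f] := poly_coord_expfam HC Hdu hx H1 p; exists f.
move=> y; split; first exact: (Lie_Ufam_sub HC Hdu HF hx H1 H2).
by case=> c; apply: (Lie_Ufam_sup Hdu HF H1 H2).
Qed.
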